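(* Let $\delta,\kappa,a,\alpha>0$ and $\varphi\in(-\pi/2,\pi/2)$, and put $d=2\pi\delta$, $\gamma=[-d,d]$, $\Gamma=\kappa\cos\varphi$, $q_0=\dfrac{2\pi\delta\kappa}{\cos\varphi}$. Let $\varepsilon^{(L)}:\gamma\to\mathbb{R}$ be continuous with $1<\varepsilon^{(L)}(z)\le E$ for all $z\in\gamma$, where $E=\max_{z\in\gamma}\varepsilon^{(L)}(z)>1$. Assume $$(E-1)q_0<1,\qquad \alpha<\alpha_0:=\frac{4}{27}\,\frac{1}{a^2}\,\frac{\bigl[1-(E-1)q_0\bigr]^3}{q_0}.$$ Then the cubic polynomial $P_K(p)=\alpha q_0p^3-\bigl(1-(E-1)q_0\bigr)p+a$ has two positive zeros $p_1<p_2$. Let $p\in(p_1,p_2)$ be such that $$t_0:=q_0\bigl(E-1+3\alpha p^2\bigr)<1,$$ and assume moreover $0<\alpha<\min\{\alpha_0,\alpha_1\}$ with $\alpha_1=\frac13\bigl\{q_0\,[1-(E-1)q_0]\bigr\}^{-1}$. Then the operator $T$ maps the closed ball $\bar S_p=\{U\in C(\gamma):\|U\|\le p\}$ into itself and is a contraction there: $\|T(U)-T(V)\|\le t_0\|U-V\|$ for all $U,V\in\bar S_p$.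
   Context: $C(\gamma)$ denotes the Banach space of continuous complex-valued functions on $\gamma$ with norm $\|U\|=\max_{z\in\gamma}|U(z)|$. The operator $T:C(\gamma)\to C(\gamma)$ is $$T(U)(z)=a\,e^{-i\Gamma(z-d)}-\frac{i\kappa^2}{2\Gamma}\int_{-d}^{d}e^{i\Gamma|z-z_0|}\Bigl[1-\varepsilon^{(L)}(z_0)-\alpha|U(z_0)|^2\Bigr]U(z_0)\,dz_0 ,$$ so that fixed points of $T$ are exactly the solutions of the nonlinear integral equation $$U(z)+\frac{i\kappa^2}{2\Gamma}\int_{-d}^{d}e^{i\Gamma|z-z_0|}\Bigl[1-\bigl(\varepsilon^{(L)}(z_0)+\alpha|U(z_0)|^2\bigr)\Bigr]U(z_0)\,dz_0=a\,e^{-i\Gamma(z-d)},\quad z\in\gamma \qquad(\ast)$$ (the integral equation for the field in a Kerr-nonlinear dielectric layer of thickness $4\pi\delta$ illuminated by a plane wave of amplitude $a$ at incidence angle $\varphi$). *)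

From Stdlib Require Import Reals Lra ClassicalEpsilon.
Open Scope R_scope.

Definition Cx := (R * R)%type.
Definition Cre (u : Cx) : R := fst u.
Definition Cim (u : Cx) : R := snd u.
Definition Cadd (u v : Cx) : Cx := (fst u + fst v, snd u + snd v).
Definition Csub (u v : Cx) : Cx := (fst u - fst v, snd u - snd v).
Definition Cmul (u v : Cx) : Cx :=
  (fst u * fst v - snd u * snd v, fst u * snd v + snd u * fst v).
Definition Cofr (r : R) : Cx := (r, 0).
Definition Ci : Cx := (0, 1).
Definition Cmod (u : Cx) : R := sqrt (fst u ^ 2 + snd u ^ 2).
Definition Cexpi (theta : R) : Cx := (cos theta, sin theta).

(* ---- total Riemann integral of a real function on [a,b]
   (the Stdlib RiemannInt when the function is Riemann integrable, 0 otherwise;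
   the value of RiemannInt does not depend on the integrability proof) ---- *)
Definition RInt (f : R -> R) (a b : R) : R :=
  match excluded_middle_informative (exists pr : Riemann_integrable f a b, True) with
  | left H => RiemannInt (proj1_sig (constructive_indefinite_description _ H))
  | right _ => 0
  end.

Definition CInt (f : R -> Cx) (a b : R) : Cx :=
  (RInt (fun x => fst (f x)) a b, RInt (fun x => snd (f x)) a b).

Definition in_gamma (d z : R) : Prop := - d <= z <= d.

(* continuity of a complex function relative to gamma (membership in C(gamma)) *)
Definition Ccont_on (d : R) (U : R -> Cx) : Prop :=
  forall x, in_gamma d x -> forall eps, 0 < eps ->
    exists del, 0 < del /\
      forall y, in_gamma d y -> Rabs (y - x) < del -> Cmod (Csub (U y) (U x)) < eps.

Definition Rcont_on (d : R) (f : R -> R) : Prop :=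
  forall x, in_gamma d x -> forall eps, 0 < eps ->
    exists del, 0 < del /\
      forall y, in_gamma d y -> Rabs (y - x) < del -> Rabs (f y - f x) < eps.

Definition T_op (a alpha kappa Gamma d : R) (epsL : R -> R) (U : R -> Cx) (z : R) : Cx :=
  Csub (Cmul (Cofr a) (Cexpi (- (Gamma * (z - d)))))
       (Cmul (Cmul Ci (Cofr (kappa ^ 2 / (2 * Gamma))))
             (CInt (fun z0 => Cmul (Cexpi (Gamma * Rabs (z - z0)))
                                   (Cmul (Cofr (1 - epsL z0 - alpha * (Cmod (U z0)) ^ 2)) (U z0)))
                   (- d) d)).

Definition PK (alpha q0 E a p : R) : R :=
  alpha * q0 * p ^ 3 - (1 - (E - 1) * q0) * p + a.

From Stdlib Require Import Reals Lra Psatz FunctionalExtensionality ClassicalEpsilon.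
Open Scope R_scope.

(** Write T(U)(z) = a e^{-i Gamma (z-d)} - (i kappa^2 / 2 Gamma) int_gamma F_U(z, z0) dz0,
   where F_U(z, z0) = e^{i Gamma |z - z0|} kerr(U(z0)) and
   kerr(u) = [1 - eps(z0) - alpha |u|^2] u.  On the ball |u| <= p the
   nonlinearity satisfies |kerr(u)| <= (E - 1 + alpha p^2) p and is Lipschitz
   with constant E - 1 + 3 alpha p^2; integrating over gamma (length 2d)
   against the coefficient kappa^2 / (2 Gamma) produces the weight q0.  Hence
   |T U| <= a + q0 (E - 1 + alpha p^2) p, which is < p exactly when P_K(p) < 0,
   and |T U - T V| <= q0 (E - 1 + 3 alpha p^2) ||U - V|| = t0 ||U - V||.
   Continuity of T U follows from a Lipschitz estimate in z.  The discriminant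
   condition alpha < alpha_0 makes P_K have two positive roots p1 < p2 with
   P_K < 0 in between. *)

(** * The modulus of a complex number *)

Lemma Cmod_nonneg (u : Cx) : 0 <= Cmod u.
Proof. unfold Cmod; apply sqrt_pos. Qed.

Lemma Cmod_sq (u : Cx) : Cmod u ^ 2 = fst u ^ 2 + snd u ^ 2.
Proof. unfold Cmod; rewrite pow2_sqrt; nra. Qed.

Lemma Cmod_le_of_sq (u : Cx) (r : R) :
  0 <= r -> fst u ^ 2 + snd u ^ 2 <= r ^ 2 -> Cmod u <= r.
Proof. intros. pose proof (Cmod_sq u); pose proof (Cmod_nonneg u); nra. Qed.

Lemma Cmod_eq_of_sq (u : Cx) (r : R) :
  0 <= r -> fst u ^ 2 + snd u ^ 2 = r ^ 2 -> Cmod u = r.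
Proof. intros. pose proof (Cmod_sq u); pose proof (Cmod_nonneg u); nra. Qed.

Lemma Cmod_mul (u v : Cx) : Cmod (Cmul u v) = Cmod u * Cmod v.
Proof.
  apply Cmod_eq_of_sq.
  - apply Rmult_le_pos; apply Cmod_nonneg.
  - rewrite Rpow_mult_distr, !Cmod_sq. destruct u, v; unfold Cmul; simpl; ring.
Qed.

Lemma Cmod_ofr (r : R) : Cmod (Cofr r) = Rabs r.
Proof.
  apply Cmod_eq_of_sq; [apply Rabs_pos |].
  unfold Cofr; cbn [fst snd]. rewrite pow2_abs; ring.
Qed.

Lemma Cmod_expi (t : R) : Cmod (Cexpi t) = 1.
Proof.
  apply Cmod_eq_of_sq; [lra |].
  unfold Cexpi; simpl. pose proof (sin2_cos2 t). unfold Rsqr in *. nra.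
Qed.

Lemma Cmod_Ci : Cmod Ci = 1.
Proof. apply Cmod_eq_of_sq; [lra | unfold Ci; simpl; ring]. Qed.

Lemma Cmod_sub_self (u : Cx) : Cmod (Csub u u) = 0.
Proof. apply Cmod_eq_of_sq; [lra | destruct u; unfold Csub; simpl; ring]. Qed.

Lemma dot_le_Cmod (u v : Cx) : fst u * fst v + snd u * snd v <= Cmod u * Cmod v.
Proof.
  pose proof (Cmod_sq u) as Hu; pose proof (Cmod_sq v) as Hv.
  pose proof (Cmod_nonneg u); pose proof (Cmod_nonneg v).
  pose proof (pow2_ge_0 (fst u * snd v - snd u * fst v)).
  assert (Hsq : (fst u * fst v + snd u * snd v) ^ 2 <= (Cmod u * Cmod v) ^ 2)
    by (rewrite Rpow_mult_distr, Hu, Hv; nra).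
  assert (0 <= Cmod u * Cmod v) by (apply Rmult_le_pos; auto).
  nra.
Qed.

Lemma Cmod_add_le (u v : Cx) : Cmod (Cadd u v) <= Cmod u + Cmod v.
Proof.
  apply Cmod_le_of_sq; [pose proof (Cmod_nonneg u); pose proof (Cmod_nonneg v); lra |].
  pose proof (dot_le_Cmod u v); pose proof (Cmod_sq u); pose proof (Cmod_sq v).
  destruct u, v; unfold Cadd; simpl in *. nra.
Qed.

Lemma Cmod_opp (u : Cx) : Cmod (Cmul (Cofr (- 1)) u) = Cmod u.
Proof. rewrite Cmod_mul, Cmod_ofr, Rabs_left by lra; ring. Qed.

Lemma Cmod_sub_le (u v : Cx) : Cmod (Csub u v) <= Cmod u + Cmod v.
Proof.
  replace (Csub u v) with (Cadd u (Cmul (Cofr (-1)) v))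
    by (destruct u, v; unfold Cadd, Csub, Cmul, Cofr; simpl; f_equal; ring).
  rewrite <- (Cmod_opp v). apply Cmod_add_le.
Qed.

Lemma Cmod_reverse_triangle (u v : Cx) : Rabs (Cmod u - Cmod v) <= Cmod (Csub u v).
Proof.
  assert (Cmod u <= Cmod (Csub u v) + Cmod v).
  { replace u with (Cadd (Csub u v) v) at 1
      by (destruct u, v; unfold Cadd, Csub; simpl; f_equal; ring).
    apply Cmod_add_le. }
  assert (Cmod v <= Cmod (Csub u v) + Cmod u).
  { replace v with (Csub u (Csub u v)) at 1
      by (destruct u, v; unfold Csub; simpl; f_equal; ring).
    eapply Rle_trans; [apply Cmod_sub_le | lra]. }
  unfold Rabs; destruct Rcase_abs; lra.
Qed.

Lemma Cmod_fst (u : Cx) : Rabs (fst u) <= Cmod u.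
Proof.
  pose proof (Cmod_sq u); pose proof (Cmod_nonneg u).
  rewrite <- (Rabs_pos_eq (Cmod u)) by auto. apply Rsqr_le_abs_0. unfold Rsqr; nra.
Qed.

Lemma Cmod_snd (u : Cx) : Rabs (snd u) <= Cmod u.
Proof.
  pose proof (Cmod_sq u); pose proof (Cmod_nonneg u).
  rewrite <- (Rabs_pos_eq (Cmod u)) by auto. apply Rsqr_le_abs_0. unfold Rsqr; nra.
Qed.

Lemma Cmod_le_components (u : Cx) : Cmod u <= Rabs (fst u) + Rabs (snd u).
Proof.
  pose proof (Rabs_pos (fst u)); pose proof (Rabs_pos (snd u)).
  apply Cmod_le_of_sq; [lra |].
  rewrite <- (pow2_abs (fst u)), <- (pow2_abs (snd u)). nra.
Qed.

Lemma Cmod_sub_mul_l (k u v : Cx) :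
  Cmod (Csub (Cmul k u) (Cmul k v)) = Cmod k * Cmod (Csub u v).
Proof.
  rewrite <- Cmod_mul. f_equal.
  destruct k, u, v; unfold Csub, Cmul; simpl; f_equal; ring.
Qed.

Lemma Cmod_sub_mul_r (k l u : Cx) :
  Cmod (Csub (Cmul k u) (Cmul l u)) = Cmod (Csub k l) * Cmod u.
Proof.
  rewrite <- Cmod_mul. f_equal.
  destruct k, l, u; unfold Csub, Cmul; simpl; f_equal; ring.
Qed.

Lemma Cmod_sub_sub_le (u' v' u v : Cx) :
  Cmod (Csub (Csub u' v') (Csub u v)) <= Cmod (Csub u' u) + Cmod (Csub v' v).
Proof.
  replace (Csub (Csub u' v') (Csub u v)) with (Csub (Csub u' u) (Csub v' v))
    by (destruct u', v', u, v; unfold Csub; simpl; f_equal; ring).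
  apply Cmod_sub_le.
Qed.

Lemma Rabs_sin_le (x : R) : Rabs (sin x) <= Rabs x.
Proof.
  assert (Hpos : forall y, 0 < y -> Rabs (sin y) <= y).
  { intros y Hy. pose proof (sin_lt_x y Hy). pose proof (SIN_bound y).
    destruct (Rle_dec 1 y); [unfold Rabs; destruct Rcase_abs; lra |].
    assert (0 <= sin y) by (apply sin_ge_0; pose proof PI2_1; lra).
    rewrite Rabs_pos_eq; lra. }
  destruct (Rtotal_order x 0) as [Hx | [Hx | Hx]].
  - replace x with (- (- x)) by ring.
    rewrite sin_neg, !Rabs_Ropp, (Rabs_left x) by lra.
    apply Hpos; lra.
  - subst; rewrite sin_0; lra.
  - rewrite (Rabs_pos_eq x) by lra. auto.
Qed.

(* |e^{ix} - e^{iy}| = 2 |sin((x-y)/2)| <= |x - y|. *)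
Lemma Cexpi_lipschitz (x y : R) : Cmod (Csub (Cexpi x) (Cexpi y)) <= Rabs (x - y).
Proof.
  apply Cmod_le_of_sq; [apply Rabs_pos |]. unfold Cexpi, Csub; cbn [fst snd].
  assert (Hchord : (cos x - cos y) ^ 2 + (sin x - sin y) ^ 2 = 2 - 2 * cos (x - y)).
  { rewrite cos_minus. pose proof (sin2_cos2 x); pose proof (sin2_cos2 y).
    unfold Rsqr in *; nra. }
  rewrite Hchord. replace (x - y) with (2 * ((x - y) / 2)) by field.
  rewrite cos_2a_sin. set (h := (x - y) / 2).
  pose proof (Rabs_sin_le h). pose proof (Rabs_pos (sin h)).
  assert (Rabs (sin h) ^ 2 <= Rabs h ^ 2) by (apply pow_incr; lra).
  rewrite pow2_abs, !pow2_abs in *. nra.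
Qed.

(** * Continuity relative to gamma = [-d, d]

   A function continuous on gamma is the restriction of the globally
   continuous function [f o clamp d], where [clamp d] is the 1-Lipschitz
   retraction of R onto gamma.  This reduces the closure properties of
   [Rcont_on] to those of the standard [continuity_pt]. *)

Definition clamp (d x : R) : R := Rmax (- d) (Rmin d x).

Lemma clamp_in_gamma (d x : R) : 0 <= d -> in_gamma d (clamp d x).
Proof. intros; unfold clamp, in_gamma, Rmax, Rmin; repeat destruct Rle_dec; lra. Qed.

Lemma clamp_id (d x : R) : in_gamma d x -> clamp d x = x.
Proof. unfold clamp, in_gamma, Rmax, Rmin; intros; repeat destruct Rle_dec; lra. Qed.

Lemma clamp_lipschitz (d x y : R) : 0 <= d -> Rabs (clamp d y - clamp d x) <= Rabs (y - x).
Proof.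
  intros; unfold clamp, Rmax, Rmin; repeat destruct Rle_dec;
    unfold Rabs; repeat destruct Rcase_abs; lra.
Qed.

Lemma Rcont_on_clamp (d : R) (f : R -> R) :
  0 <= d -> Rcont_on d f -> forall x, continuity_pt (fun y => f (clamp d y)) x.
Proof.
  intros Hd Hf x eps Heps.
  destruct (Hf (clamp d x) (clamp_in_gamma d x Hd) eps Heps) as [del [Hdel H]].
  exists del; split; auto. intros y [_ Hy]. simpl in *; unfold R_dist in *.
  apply H; [apply clamp_in_gamma; auto |].
  eapply Rle_lt_trans; [apply clamp_lipschitz; auto | auto].
Qed.

Lemma Rcont_on_of_clamp (d : R) (f : R -> R) :
  (forall x, continuity_pt (fun y => f (clamp d y)) x) -> Rcont_on d f.
Proof.
  intros Hf x Hx eps Heps.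
  destruct (Hf x eps Heps) as [del [Hdel H]]. exists del; split; auto.
  intros y Hy Hyx.
  destruct (Req_dec x y) as [<- | Hne].
  - unfold Rminus; rewrite Rplus_opp_r, Rabs_R0; auto.
  - specialize (H y). simpl in H; unfold R_dist in H.
    rewrite !clamp_id in H by auto. apply H. split; auto. unfold D_x, no_cond; auto.
Qed.

Section ClosureProperties.
Variable d : R.
Hypothesis Hd : 0 <= d.

Lemma Rcont_const (c : R) : Rcont_on d (fun _ => c).
Proof. apply Rcont_on_of_clamp; intros; apply continuity_pt_const; intros ? ?; reflexivity. Qed.

Lemma Rcont_id : Rcont_on d (fun x => x).
Proof. intros x _ eps Heps. exists eps; split; auto. Qed.

Lemma Rcont_plus (f g : R -> R) :
  Rcont_on d f -> Rcont_on d g -> Rcont_on d (fun x => f x + g x).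
Proof.
  intros Hf Hg. apply Rcont_on_of_clamp; intros.
  apply continuity_pt_plus; apply Rcont_on_clamp; auto.
Qed.

Lemma Rcont_minus (f g : R -> R) :
  Rcont_on d f -> Rcont_on d g -> Rcont_on d (fun x => f x - g x).
Proof.
  intros Hf Hg. apply Rcont_on_of_clamp; intros.
  apply continuity_pt_minus; apply Rcont_on_clamp; auto.
Qed.

Lemma Rcont_mult (f g : R -> R) :
  Rcont_on d f -> Rcont_on d g -> Rcont_on d (fun x => f x * g x).
Proof.
  intros Hf Hg. apply Rcont_on_of_clamp; intros.
  apply continuity_pt_mult; apply Rcont_on_clamp; auto.
Qed.

Lemma Rcont_comp (g f : R -> R) :
  continuity g -> Rcont_on d f -> Rcont_on d (fun x => g (f x)).
Proof.
  intros Hg Hf. apply Rcont_on_of_clamp; intros.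
  apply (continuity_pt_comp (fun y => f (clamp d y)) g); auto.
  apply Rcont_on_clamp; auto.
Qed.

Lemma Rcont_integrable (f : R -> R) : Rcont_on d f -> Riemann_integrable f (- d) d.
Proof.
  intros Hf. apply Riemann_integrable_ext with (f := fun y => f (clamp d y)).
  - intros x Hx. rewrite Rmin_left, Rmax_right in Hx by lra.
    now rewrite clamp_id by (unfold in_gamma; lra).
  - apply continuity_implies_RiemannInt; [lra |].
    intros; apply Rcont_on_clamp; auto.
Qed.

Lemma Ccont_fst (U : R -> Cx) : Ccont_on d U -> Rcont_on d (fun x => fst (U x)).
Proof.
  intros H x Hx eps Heps. destruct (H x Hx eps Heps) as [del [Hdel H']].
  exists del; split; auto. intros y Hy Hyx.
  eapply Rle_lt_trans; [apply (Cmod_fst (Csub (U y) (U x))) | eauto].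
Qed.

Lemma Ccont_snd (U : R -> Cx) : Ccont_on d U -> Rcont_on d (fun x => snd (U x)).
Proof.
  intros H x Hx eps Heps. destruct (H x Hx eps Heps) as [del [Hdel H']].
  exists del; split; auto. intros y Hy Hyx.
  eapply Rle_lt_trans; [apply (Cmod_snd (Csub (U y) (U x))) | eauto].
Qed.

Lemma Ccont_pair (f g : R -> R) :
  Rcont_on d f -> Rcont_on d g -> Ccont_on d (fun x => (f x, g x)).
Proof.
  intros Hf Hg x Hx eps Heps.
  destruct (Hf x Hx (eps / 2)) as [d1 [Hd1 H1]]; [lra |].
  destruct (Hg x Hx (eps / 2)) as [d2 [Hd2 H2]]; [lra |].
  exists (Rmin d1 d2); split; [apply Rmin_pos; auto |].
  intros y Hy Hyx.
  pose proof (Rmin_l d1 d2); pose proof (Rmin_r d1 d2).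
  specialize (H1 y Hy ltac:(lra)); specialize (H2 y Hy ltac:(lra)).
  eapply Rle_lt_trans; [apply Cmod_le_components |]. unfold Csub; simpl; lra.
Qed.

Lemma Rcont_Cmod (U : R -> Cx) : Ccont_on d U -> Rcont_on d (fun x => Cmod (U x)).
Proof.
  intros H x Hx eps Heps. destruct (H x Hx eps Heps) as [del [Hdel H']].
  exists del; split; auto. intros y Hy Hyx.
  eapply Rle_lt_trans; [apply Cmod_reverse_triangle | eauto].
Qed.

Lemma Ccont_mul (U V : R -> Cx) :
  Ccont_on d U -> Ccont_on d V -> Ccont_on d (fun x => Cmul (U x) (V x)).
Proof.
  intros HU HV.
  pose proof (Ccont_fst U HU); pose proof (Ccont_snd U HU).
  pose proof (Ccont_fst V HV); pose proof (Ccont_snd V HV).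
  apply Ccont_pair.
  - apply Rcont_minus; apply Rcont_mult; auto.
  - apply Rcont_plus; apply Rcont_mult; auto.
Qed.

Lemma Ccont_ofr (r : R -> R) : Rcont_on d r -> Ccont_on d (fun x => Cofr (r x)).
Proof. intros H. apply Ccont_pair; auto. apply Rcont_const. Qed.

Lemma Ccont_expi (t : R -> R) : Rcont_on d t -> Ccont_on d (fun x => Cexpi (t x)).
Proof.
  intros H. apply Ccont_pair; apply Rcont_comp; auto.
  - exact continuity_cos.
  - exact continuity_sin.
Qed.

Lemma Ccont_of_lipschitz (U : R -> Cx) (L : R) : 0 <= L ->
  (forall y z, in_gamma d y -> in_gamma d z -> Cmod (Csub (U y) (U z)) <= L * Rabs (y - z)) ->
  Ccont_on d U.
Proof.
  intros HL HU z Hz eps Heps. exists (eps / (L + 1)).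
  split; [apply Rdiv_lt_0_compat; lra |]. intros y Hy Hyz.
  eapply Rle_lt_trans; [apply HU; auto |].
  apply Rle_lt_trans with (L * (eps / (L + 1))).
  - apply Rmult_le_compat_l; lra.
  - apply Rmult_lt_reg_r with (L + 1); [lra |]. field_simplify; lra.
Qed.

End ClosureProperties.

(** * Integrals of complex functions *)

Lemma RInt_eq (f : R -> R) (a b : R) (pr : Riemann_integrable f a b) :
  RInt f a b = RiemannInt pr.
Proof.
  unfold RInt. destruct excluded_middle_informative as [H | H].
  - apply RiemannInt_P5.
  - exfalso; apply H; exists pr; auto.
Qed.

Lemma RInt_lin (f g : R -> R) (a b l : R) :
  Riemann_integrable f a b -> Riemann_integrable g a b ->
  RInt (fun x => f x + l * g x) a b = RInt f a b + l * RInt g a b.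
Proof.
  intros pf pg.
  rewrite (RInt_eq _ _ _ (RiemannInt_P10 l pf pg)), (RInt_eq _ _ _ pf), (RInt_eq _ _ _ pg).
  apply RiemannInt_P13.
Qed.

Lemma RInt_scal (f : R -> R) (a b k : R) :
  Riemann_integrable f a b -> RInt (fun x => k * f x) a b = k * RInt f a b.
Proof.
  intros pf. pose proof (RInt_lin (fct_cte 0) f a b k (RiemannInt_P14 a b 0) pf) as H.
  rewrite (RInt_eq _ _ _ (RiemannInt_P14 a b 0)), RiemannInt_P15 in H.
  replace (fun x => k * f x) with (fun x => fct_cte 0 x + k * f x)
    by (apply functional_extensionality; intros; unfold fct_cte; ring).
  rewrite H; ring.
Qed.

Lemma Riemann_integrable_minus (f g : R -> R) (a b : R) :
  Riemann_integrable f a b -> Riemann_integrable g a b ->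
  Riemann_integrable (fun x => f x - g x) a b.
Proof.
  intros pf pg. apply Riemann_integrable_ext with (f := fun x => f x + -1 * g x).
  - intros; ring.
  - apply RiemannInt_P10; auto.
Qed.

Lemma RInt_minus (f g : R -> R) (a b : R) :
  Riemann_integrable f a b -> Riemann_integrable g a b ->
  RInt (fun x => f x - g x) a b = RInt f a b - RInt g a b.
Proof.
  intros pf pg. rewrite <- (Rplus_0_r (RInt f a b - RInt g a b)).
  replace (RInt f a b - RInt g a b + 0) with (RInt f a b + -1 * RInt g a b) by ring.
  rewrite <- RInt_lin by auto.
  f_equal; apply functional_extensionality; intros; ring.
Qed.

Definition CIntegrable (F : R -> Cx) (a b : R) : Type :=
  (Riemann_integrable (fun x => fst (F x)) a b * Riemann_integrable (fun x => snd (F x)) a b)%type.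

Lemma CIntegrable_minus (F G : R -> Cx) (a b : R) :
  CIntegrable F a b -> CIntegrable G a b -> CIntegrable (fun x => Csub (F x) (G x)) a b.
Proof.
  intros [pF1 pF2] [pG1 pG2].
  split; apply Riemann_integrable_minus; auto.
Qed.

Lemma CInt_minus (F G : R -> Cx) (a b : R) :
  CIntegrable F a b -> CIntegrable G a b ->
  Csub (CInt F a b) (CInt G a b) = CInt (fun x => Csub (F x) (G x)) a b.
Proof.
  intros [pF1 pF2] [pG1 pG2]. unfold CInt, Csub at 1; simpl.
  f_equal; symmetry; apply RInt_minus; auto.
Qed.

(* |int_a^b F| <= K (b - a) when |F| <= K on [a, b]: integrate the scalar
   product of F with the (constant) value of the integral. *)
Lemma CInt_bound (F : R -> Cx) (a b K : R) :
  a <= b -> CIntegrable F a b ->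
  (forall x, a <= x <= b -> Cmod (F x) <= K) ->
  Cmod (CInt F a b) <= K * (b - a).
Proof.
  intros Hab [p1 p2] HK.
  assert (HK0 : 0 <= K) by (eapply Rle_trans; [apply Cmod_nonneg | apply (HK a); lra]).
  set (I1 := RInt (fun x => fst (F x)) a b). set (I2 := RInt (fun x => snd (F x)) a b).
  change (CInt F a b) with (I1, I2).
  set (m := Cmod (I1, I2)).
  set (h := fun x => I1 * fst (F x) + I2 * snd (F x)).
  assert (ph : Riemann_integrable h a b)
    by (apply RiemannInt_P10; auto; apply Riemann_integrable_scal; auto).
  assert (Hh : RInt h a b = m ^ 2).
  { unfold m; rewrite Cmod_sq; simpl. unfold h.
    rewrite RInt_lin, RInt_scal by (auto; apply Riemann_integrable_scal; auto).
    fold I1 I2; ring. }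
  assert (Hhb : RInt h a b <= (m * K) * (b - a)).
  { rewrite (RInt_eq _ _ _ ph).
    refine (proj2 (RiemannInt_const_bound (l := - (m * K)) ph Hab _)).
    intros x Hx. pose proof (HK x ltac:(lra)).
    pose proof (dot_le_Cmod (I1, I2) (F x)) as Hup.
    pose proof (dot_le_Cmod (Cmul (Cofr (-1)) (I1, I2)) (F x)) as Hlow.
    rewrite Cmod_opp in Hlow. unfold Cmul, Cofr in Hlow; simpl in Hup, Hlow.
    fold m in Hup, Hlow. pose proof (Cmod_nonneg (F x)). unfold h.
    assert (m * Cmod (F x) <= m * K) by (apply Rmult_le_compat_l; auto; apply Cmod_nonneg).
    split; nra. }
  rewrite Hh in Hhb. fold m.
  pose proof (Cmod_nonneg (I1, I2)). fold m in H.
  assert (0 <= K * (b - a)) by (apply Rmult_le_pos; lra).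
  nra.
Qed.

(** * The cubic P_K

   For A, c, a > 0 with discriminant condition 27 a^2 A < 4 c^3, the cubic
   A x^3 - c x + a is negative at its critical point sqrt(c / 3A); it is
   positive at 0 and at sqrt(c / A), so it has two positive roots p1 < p2,
   is negative strictly between them, and factors as
   A (x - p1) (x - p2) (x + p1 + p2), which excludes further positive roots. *)

Lemma cubic_negative_at_critical_point (A c a : R) :
  0 < A -> 0 < c -> 0 < a -> 27 * a ^ 2 * A < 4 * c ^ 3 ->
  let s := sqrt (c / (3 * A)) in A * s ^ 3 - c * s + a < 0.
Proof.
  intros HA Hc Ha Hdisc s.
  assert (Hs2 : s ^ 2 = c / (3 * A))
    by (unfold s; rewrite pow2_sqrt; [auto | apply Rlt_le, Rdiv_lt_0_compat; lra]).
  assert (Hs : 0 < s) by (apply sqrt_lt_R0, Rdiv_lt_0_compat; lra).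
  assert (HAs : A * s ^ 3 = c / 3 * s)
    by (replace (s ^ 3) with (s ^ 2 * s) by ring; rewrite Hs2; field; lra).
  rewrite HAs.
  assert (Hsq : a ^ 2 < (2 * c / 3 * s) ^ 2).
  { replace ((2 * c / 3 * s) ^ 2) with (4 * c ^ 2 / 9 * s ^ 2) by field. rewrite Hs2.
    apply Rmult_lt_reg_r with (27 * A); [lra |].
    replace (4 * c ^ 2 / 9 * (c / (3 * A)) * (27 * A)) with (4 * c ^ 3) by (field; lra).
    lra. }
  assert (0 < 2 * c / 3 * s) by (apply Rmult_lt_0_compat; lra).
  nra.
Qed.

Lemma cubic_two_positive_roots (A c a : R) :
  0 < A -> 0 < c -> 0 < a -> 27 * a ^ 2 * A < 4 * c ^ 3 ->
  exists p1 p2, 0 < p1 /\ p1 < p2 /\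
    A * p1 ^ 3 - c * p1 + a = 0 /\ A * p2 ^ 3 - c * p2 + a = 0 /\
    (forall x, 0 < x -> A * x ^ 3 - c * x + a = 0 -> x = p1 \/ x = p2) /\
    (forall x, p1 < x < p2 -> A * x ^ 3 - c * x + a < 0).
Proof.
  intros HA Hc Ha Hdisc.
  set (f := fun x => A * x ^ 3 - c * x + a).
  assert (Cf : continuity f) by (unfold f; reg).
  set (s := sqrt (c / (3 * A))).
  assert (Hfs : f s < 0) by (apply cubic_negative_at_critical_point; auto).
  assert (Hs : 0 < s) by (apply sqrt_lt_R0, Rdiv_lt_0_compat; lra).
  set (Y := sqrt (c / A)).
  assert (HY2 : Y ^ 2 = c / A)
    by (unfold Y; rewrite pow2_sqrt; [auto | apply Rlt_le, Rdiv_lt_0_compat; lra]).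
  assert (HY : 0 < Y) by (apply sqrt_lt_R0, Rdiv_lt_0_compat; lra).
  assert (HfY : 0 < f Y).
  { unfold f. replace (Y ^ 3) with (Y ^ 2 * Y) by ring. rewrite HY2.
    replace (A * (c / A * Y)) with (c * Y) by (field; lra). lra. }
  assert (HsY : s < Y).
  { apply sqrt_lt_1; try (apply Rlt_le, Rdiv_lt_0_compat; lra).
    unfold Rdiv; rewrite Rinv_mult. apply Rmult_lt_compat_l; [lra |].
    pose proof (Rinv_0_lt_compat A HA). nra. }
  assert (Hf0 : 0 < f 0) by (unfold f; simpl; lra).
  destruct (IVT_cor f 0 s Cf ltac:(lra) ltac:(nra)) as [p1 [Hp1 Ep1]].
  destruct (IVT_cor f s Y Cf ltac:(lra) ltac:(nra)) as [p2 [Hp2 Ep2]].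
  assert (p1 <> 0) by (intros ->; lra).
  assert (p1 <> s) by (intros ->; lra).
  assert (p2 <> s) by (intros ->; lra).
  unfold f in Ep1, Ep2.
  assert (Hsum : A * (p1 ^ 2 + p1 * p2 + p2 ^ 2) = c).
  { assert (Hprod : (p2 - p1) * (A * (p1 ^ 2 + p1 * p2 + p2 ^ 2) - c) = 0) by nra.
    apply Rmult_integral in Hprod. destruct Hprod; lra. }
  assert (Hfactor : forall x, A * x ^ 3 - c * x + a = A * (x - p1) * (x - p2) * (x + p1 + p2)).
  { intros x. assert (a = A * p1 * p2 * (p1 + p2)) as -> by nra. rewrite <- Hsum. ring. }
  exists p1, p2. repeat split; try lra.
  - intros x Hx Ex. rewrite Hfactor in Ex.
    destruct (Rmult_integral _ _ Ex) as [Ex' | Ex']; [| lra].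
    destruct (Rmult_integral _ _ Ex') as [Ex'' | Ex'']; [| right; lra].
    destruct (Rmult_integral _ _ Ex''); [lra | left; lra].
  - intros x Hx. rewrite Hfactor.
    assert (0 < A * (x - p1)) by (apply Rmult_lt_0_compat; lra).
    assert (A * (x - p1) * (x - p2) < 0) by nra.
    nra.
Qed.

Lemma PK_two_positive_roots (alpha q0 E a : R) :
  0 < alpha -> 0 < q0 -> 0 < a -> (E - 1) * q0 < 1 ->
  alpha < 4 / 27 * (1 / a ^ 2) * ((1 - (E - 1) * q0) ^ 3 / q0) ->
  exists p1 p2, 0 < p1 /\ p1 < p2 /\ PK alpha q0 E a p1 = 0 /\ PK alpha q0 E a p2 = 0 /\
    (forall x, 0 < x -> PK alpha q0 E a x = 0 -> x = p1 \/ x = p2) /\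
    (forall x, p1 < x < p2 -> PK alpha q0 E a x < 0).
Proof.
  intros Halpha Hq Ha Hq0 Halpha0.
  set (c := 1 - (E - 1) * q0) in *.
  assert (HPK : forall x, PK alpha q0 E a x = alpha * q0 * x ^ 3 - c * x + a)
    by (intros; unfold PK, c; ring).
  assert (Hdisc : 27 * a ^ 2 * (alpha * q0) < 4 * c ^ 3).
  { assert (0 < a ^ 2) by (apply pow_lt; lra).
    apply Rmult_lt_compat_l with (r := 27 * a ^ 2 * q0) in Halpha0;
      [| apply Rmult_lt_0_compat; lra].
    replace (27 * a ^ 2 * q0 * (4 / 27 * (1 / a ^ 2) * (c ^ 3 / q0))) with (4 * c ^ 3)
      in Halpha0 by (field; lra).
    lra. }
  assert (Hc : 0 < c) by (unfold c; lra).
  assert (HA : 0 < alpha * q0) by (apply Rmult_lt_0_compat; lra).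
  destruct (cubic_two_positive_roots (alpha * q0) c a HA Hc Ha Hdisc) as
      (p1 & p2 & Hp1 & H12 & Hroot1 & Hroot2 & Honly & Hneg).
  exists p1, p2. rewrite !HPK.
  repeat split; auto; intros x Hx; rewrite HPK; auto.
Qed.

(** * The Kerr nonlinearity and the integrand of T *)

Definition kerr (e alpha : R) (u : Cx) : Cx := Cmul (Cofr (1 - e - alpha * Cmod u ^ 2)) u.

Lemma kerr_bound (e alpha E p : R) (u : Cx) :
  0 <= alpha -> 1 < e <= E -> Cmod u <= p ->
  Cmod (kerr e alpha u) <= (E - 1 + alpha * p ^ 2) * p.
Proof.
  intros Halpha He Hu. unfold kerr. rewrite Cmod_mul, Cmod_ofr.
  pose proof (Cmod_nonneg u). set (m := Cmod u) in *.
  assert (m ^ 2 <= p ^ 2) by (apply pow_incr; lra).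
  rewrite Rabs_left1 by nra.
  apply Rmult_le_compat; nra.
Qed.

(* ... and Lipschitz with constant E - 1 + 3 alpha p^2, since
   |u|^2 u - |v|^2 v = |u|^2 (u - v) + (|u| - |v|)(|u| + |v|) v. *)
Lemma kerr_lipschitz (e alpha E p : R) (u v : Cx) :
  0 <= alpha -> 0 <= p -> 1 < e <= E -> Cmod u <= p -> Cmod v <= p ->
  Cmod (Csub (kerr e alpha u) (kerr e alpha v)) <= (E - 1 + 3 * alpha * p ^ 2) * Cmod (Csub u v).
Proof.
  intros Halpha Hp He Hu Hv. unfold kerr.
  set (mu := Cmod u) in *. set (mv := Cmod v) in *. set (w := Cmod (Csub u v)).
  replace (Csub (Cmul (Cofr (1 - e - alpha * mu ^ 2)) u) (Cmul (Cofr (1 - e - alpha * mv ^ 2)) v))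
    with (Cadd (Cmul (Cofr (1 - e)) (Csub u v))
               (Cmul (Cofr (- alpha))
                     (Cadd (Cmul (Cofr (mu ^ 2)) (Csub u v)) (Cmul (Cofr (mu ^ 2 - mv ^ 2)) v))))
    by (destruct u, v; unfold Cadd, Csub, Cmul, Cofr; simpl; f_equal; ring).
  eapply Rle_trans; [apply Cmod_add_le |].
  eapply Rle_trans.
  { apply Rplus_le_compat_l. rewrite Cmod_mul. apply Rmult_le_compat_l; [apply Cmod_nonneg |].
    apply Cmod_add_le. }
  rewrite !Cmod_mul, !Cmod_ofr. fold w mv.
  pose proof (Cmod_nonneg u); pose proof (Cmod_nonneg v); pose proof (Cmod_nonneg (Csub u v)).
  fold mu mv w in H, H0, H1.
  assert (Hdiff : Rabs (mu - mv) <= w) by apply Cmod_reverse_triangle.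
  assert (Hsq : Rabs (mu ^ 2 - mv ^ 2) <= 2 * p * w).
  { replace (mu ^ 2 - mv ^ 2) with ((mu - mv) * (mu + mv)) by ring.
    rewrite Rabs_mult, (Rabs_pos_eq (mu + mv)) by lra.
    pose proof (Rabs_pos (mu - mv)). nra. }
  rewrite Rabs_Ropp, (Rabs_pos_eq alpha), (Rabs_pos_eq (mu ^ 2)), (Rabs_left1 (1 - e)) by nra.
  assert (mu ^ 2 <= p ^ 2) by (apply pow_incr; lra).
  assert (Rabs (mu ^ 2 - mv ^ 2) * mv <= 2 * p * w * p)
    by (apply Rmult_le_compat; auto; apply Rabs_pos).
  assert (Hcubic : mu ^ 2 * w + Rabs (mu ^ 2 - mv ^ 2) * mv <= 3 * p ^ 2 * w) by nra.
  assert (alpha * (mu ^ 2 * w + Rabs (mu ^ 2 - mv ^ 2) * mv) <= alpha * (3 * p ^ 2 * w))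
    by (apply Rmult_le_compat_l; lra).
  nra.
Qed.

Definition integrand (alpha Gamma : R) (epsL : R -> R) (U : R -> Cx) (z z0 : R) : Cx :=
  Cmul (Cexpi (Gamma * Rabs (z - z0))) (kerr (epsL z0) alpha (U z0)).

Lemma T_op_eq (a alpha kappa Gamma d : R) (epsL : R -> R) (U : R -> Cx) (z : R) :
  T_op a alpha kappa Gamma d epsL U z =
  Csub (Cmul (Cofr a) (Cexpi (- (Gamma * (z - d)))))
       (Cmul (Cmul Ci (Cofr (kappa ^ 2 / (2 * Gamma))))
             (CInt (integrand alpha Gamma epsL U z) (- d) d)).
Proof. reflexivity. Qed.

Lemma integrand_lipschitz_z (alpha Gamma : R) (epsL : R -> R) (U : R -> Cx) (y z z0 : R) :
  0 <= Gamma ->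
  Cmod (Csub (integrand alpha Gamma epsL U y z0) (integrand alpha Gamma epsL U z z0))
    <= Gamma * Rabs (y - z) * Cmod (kerr (epsL z0) alpha (U z0)).
Proof.
  intros HGamma. unfold integrand. rewrite Cmod_sub_mul_r.
  apply Rmult_le_compat_r; [apply Cmod_nonneg |].
  eapply Rle_trans; [apply Cexpi_lipschitz |].
  rewrite <- Rmult_minus_distr_l, Rabs_mult, (Rabs_pos_eq Gamma) by lra.
  apply Rmult_le_compat_l; auto.
  eapply Rle_trans; [apply Rabs_triang_inv2 | right; f_equal; ring].
Qed.

Lemma integrand_lipschitz_U (alpha Gamma E p : R) (epsL : R -> R) (U V : R -> Cx) (z z0 : R) :
  0 <= alpha -> 0 <= p -> 1 < epsL z0 <= E -> Cmod (U z0) <= p -> Cmod (V z0) <= p ->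
  Cmod (Csub (integrand alpha Gamma epsL U z z0) (integrand alpha Gamma epsL V z z0))
    <= (E - 1 + 3 * alpha * p ^ 2) * Cmod (Csub (U z0) (V z0)).
Proof.
  intros. unfold integrand. rewrite Cmod_sub_mul_l, Cmod_expi, Rmult_1_l.
  apply kerr_lipschitz; auto.
Qed.

Section Operator.
Variables (a alpha kappa Gamma d E : R) (epsL : R -> R).
Hypotheses (Ha : 0 <= a) (Halpha : 0 <= alpha) (HGamma : 0 < Gamma) (Hd : 0 <= d).
Hypothesis Heps_cont : Rcont_on d epsL.
Hypothesis Heps_range : forall z, in_gamma d z -> 1 < epsL z <= E.

Let T := T_op a alpha kappa Gamma d epsL.
Let F := integrand alpha Gamma epsL.

(* The total weight |i kappa^2 / (2 Gamma)| * |gamma| of the integral term;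
   it equals the paper's q0. *)
Definition weight : R := kappa ^ 2 / (2 * Gamma) * (2 * d).

Lemma integrand_integrable (U : R -> Cx) (z : R) : Ccont_on d U -> CIntegrable (F U z) (- d) d.
Proof.
  intros HU.
  assert (HC : Ccont_on d (F U z)).
  { apply Ccont_mul; auto.
    - apply Ccont_expi; auto. apply Rcont_mult; auto; [apply Rcont_const |].
      apply Rcont_comp; [auto | exact Rcontinuity_abs |].
      apply Rcont_minus; auto; [apply Rcont_const | apply Rcont_id].
    - apply Ccont_mul; auto. apply Ccont_ofr.
      apply Rcont_minus; auto; [apply Rcont_minus; auto; apply Rcont_const |].
      apply Rcont_mult; auto; [apply Rcont_const |].
      apply (Rcont_comp d Hd (fun x => x ^ 2)); [reg | apply Rcont_Cmod; auto]. }
  split; apply Rcont_integrable; auto; [apply Ccont_fst | apply Ccont_snd]; auto.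
Qed.

Lemma gamma_0 : in_gamma d 0.
Proof. unfold in_gamma; lra. Qed.

Lemma E_gt_1 : 1 < E.
Proof. destruct (Heps_range 0 gamma_0); lra. Qed.

Lemma radius_nonneg (U : R -> Cx) (p : R) : (forall z, in_gamma d z -> Cmod (U z) <= p) -> 0 <= p.
Proof. intros HU. eapply Rle_trans; [apply Cmod_nonneg | apply (HU 0 gamma_0)]. Qed.

Lemma coefficient_nonneg : 0 <= kappa ^ 2 / (2 * Gamma).
Proof. apply Rmult_le_pos; [apply pow2_ge_0 | apply Rlt_le, Rinv_0_lt_compat; lra]. Qed.

Lemma T_op_diff (U V : R -> Cx) (y z : R) : Ccont_on d U -> Ccont_on d V ->
  Cmod (Csub (T U y) (T V z))
    <= a * Cmod (Csub (Cexpi (- (Gamma * (y - d)))) (Cexpi (- (Gamma * (z - d)))))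
       + kappa ^ 2 / (2 * Gamma) * Cmod (CInt (fun x => Csub (F U y x) (F V z x)) (- d) d).
Proof.
  intros HU HV. unfold T; rewrite !T_op_eq.
  eapply Rle_trans; [apply Cmod_sub_sub_le |].
  rewrite !Cmod_sub_mul_l, Cmod_mul, Cmod_Ci, !Cmod_ofr, !Rabs_pos_eq, Rmult_1_l
    by (auto; apply coefficient_nonneg).
  rewrite CInt_minus; [apply Rle_refl | apply integrand_integrable; auto ..].
Qed.

Section Ball.
Variable p : R.

Let K0 : R := (E - 1 + alpha * p ^ 2) * p.

(* On the ball, T U is Lipschitz in z (hence continuous): both the incident
   plane wave and the phase of the integrand move at speed Gamma. *)
Lemma T_op_lipschitz (U : R -> Cx) (y z : R) :
  Ccont_on d U -> (forall x, in_gamma d x -> Cmod (U x) <= p) ->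
  Cmod (Csub (T U y) (T U z)) <= (a * Gamma + weight * Gamma * K0) * Rabs (y - z).
Proof.
  intros HU HUp.
  eapply Rle_trans; [apply T_op_diff; auto |].
  assert (Hwave : Cmod (Csub (Cexpi (- (Gamma * (y - d)))) (Cexpi (- (Gamma * (z - d)))))
                  <= Gamma * Rabs (y - z)).
  { eapply Rle_trans; [apply Cexpi_lipschitz | right].
    replace (- (Gamma * (y - d)) - - (Gamma * (z - d))) with (- (Gamma * (y - z))) by ring.
    rewrite Rabs_Ropp, Rabs_mult, Rabs_pos_eq; lra. }
  assert (Hint : Cmod (CInt (fun x => Csub (F U y x) (F U z x)) (- d) d)
                 <= Gamma * Rabs (y - z) * K0 * (d - - d)).
  { apply CInt_bound; [lra | apply CIntegrable_minus; apply integrand_integrable; auto |].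
    intros x Hx. eapply Rle_trans; [apply integrand_lipschitz_z; lra |].
    apply Rmult_le_compat_l; [pose proof (Rabs_pos (y - z)); nra |].
    apply kerr_bound; auto; apply Heps_range || apply HUp; unfold in_gamma; lra. }
  pose proof coefficient_nonneg.
  assert (a * Cmod (Csub (Cexpi (- (Gamma * (y - d)))) (Cexpi (- (Gamma * (z - d)))))
          <= a * (Gamma * Rabs (y - z))) by (apply Rmult_le_compat_l; auto).
  assert (kappa ^ 2 / (2 * Gamma) * Cmod (CInt (fun x => Csub (F U y x) (F U z x)) (- d) d)
          <= kappa ^ 2 / (2 * Gamma) * (Gamma * Rabs (y - z) * K0 * (d - - d)))
    by (apply Rmult_le_compat_l; auto).
  unfold weight. nra.
Qed.

Lemma T_op_continuous (U : R -> Cx) :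
  Ccont_on d U -> (forall x, in_gamma d x -> Cmod (U x) <= p) -> Ccont_on d (T U).
Proof.
  intros HU HUp. apply Ccont_of_lipschitz with (L := a * Gamma + weight * Gamma * K0).
  - pose proof (radius_nonneg U p HUp); pose proof E_gt_1; pose proof coefficient_nonneg.
    assert (0 <= K0) by (unfold K0; apply Rmult_le_pos; nra).
    assert (0 <= weight) by (unfold weight; apply Rmult_le_pos; lra).
    apply Rplus_le_le_0_compat; [nra | apply Rmult_le_pos; [apply Rmult_le_pos |]; lra].
  - intros y z _ _. apply T_op_lipschitz; auto.
Qed.

Lemma T_op_bound (U : R -> Cx) (z : R) :
  Ccont_on d U -> (forall x, in_gamma d x -> Cmod (U x) <= p) ->
  Cmod (T U z) <= a + weight * K0.
Proof.
  intros HU HUp. unfold T; rewrite T_op_eq.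
  eapply Rle_trans; [apply Cmod_sub_le |].
  rewrite !Cmod_mul, Cmod_ofr, Cmod_expi, Cmod_Ci, Cmod_ofr, !Rabs_pos_eq, !Rmult_1_l, Rmult_1_r
    by (auto; apply coefficient_nonneg).
  apply Rplus_le_compat_l.
  assert (Hint : Cmod (CInt (F U z) (- d) d) <= K0 * (d - - d)).
  { apply CInt_bound; [lra | apply integrand_integrable; auto |].
    intros x Hx. unfold F, integrand. rewrite Cmod_mul, Cmod_expi, Rmult_1_l.
    apply kerr_bound; auto; apply Heps_range || apply HUp; unfold in_gamma; lra. }
  unfold weight. pose proof coefficient_nonneg.
  replace (kappa ^ 2 / (2 * Gamma) * (2 * d) * K0) with (kappa ^ 2 / (2 * Gamma) * (K0 * (d - - d)))
    by ring.
  apply Rmult_le_compat_l; auto.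
Qed.

(* Contraction estimate: the plane wave cancels and the integrand is
   Lipschitz in U with constant E - 1 + 3 alpha p^2. *)
Lemma T_op_contraction (U V : R -> Cx) (M z : R) :
  Ccont_on d U -> Ccont_on d V ->
  (forall x, in_gamma d x -> Cmod (U x) <= p) ->
  (forall x, in_gamma d x -> Cmod (V x) <= p) ->
  (forall x, in_gamma d x -> Cmod (Csub (U x) (V x)) <= M) ->
  Cmod (Csub (T U z) (T V z)) <= weight * (E - 1 + 3 * alpha * p ^ 2) * M.
Proof.
  intros HU HV HUp HVp HM.
  eapply Rle_trans; [apply T_op_diff; auto |].
  rewrite Cmod_sub_self, Rmult_0_r, Rplus_0_l.
  pose proof (radius_nonneg U p HUp); pose proof E_gt_1; pose proof coefficient_nonneg.
  assert (Hint : Cmod (CInt (fun x => Csub (F U z x) (F V z x)) (- d) d)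
                 <= (E - 1 + 3 * alpha * p ^ 2) * M * (d - - d)).
  { apply CInt_bound; [lra | apply CIntegrable_minus; apply integrand_integrable; auto |].
    intros x Hx. assert (Hx' : in_gamma d x) by (unfold in_gamma; lra).
    eapply Rle_trans; [apply (integrand_lipschitz_U alpha Gamma E p); auto |].
    apply Rmult_le_compat_l; [nra | auto]. }
  unfold weight.
  replace (kappa ^ 2 / (2 * Gamma) * (2 * d) * (E - 1 + 3 * alpha * p ^ 2) * M)
    with (kappa ^ 2 / (2 * Gamma) * ((E - 1 + 3 * alpha * p ^ 2) * M * (d - - d))) by ring.
  apply Rmult_le_compat_l; auto.
Qed.

End Ball.
End Operator.

Theorem theorem1
  (delta kappa a alpha phi E : R) (epsL : R -> R)
  (Hdelta : 0 < delta) (Hkappa : 0 < kappa) (Ha : 0 < a) (Halpha : 0 < alpha)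
  (Hphi : - (PI / 2) < phi < PI / 2)
  (Heps_cont : Rcont_on (2 * PI * delta) epsL)
  (Heps_gt1 : forall z, in_gamma (2 * PI * delta) z -> 1 < epsL z)
  (HE_ub : forall z, in_gamma (2 * PI * delta) z -> epsL z <= E)
  (HE_att : exists z, in_gamma (2 * PI * delta) z /\ epsL z = E)
  (Hq0 : (E - 1) * (2 * PI * delta * kappa / cos phi) < 1)
  (Halpha0 : alpha < 4 / 27 * (1 / a ^ 2) *
       ((1 - (E - 1) * (2 * PI * delta * kappa / cos phi)) ^ 3
        / (2 * PI * delta * kappa / cos phi))) :
  let d := 2 * PI * delta in
  let Gamma := kappa * cos phi in
  let q0 := 2 * PI * delta * kappa / cos phi in
  exists p1 p2 : R,
    0 < p1 /\ p1 < p2 /\ PK alpha q0 E a p1 = 0 /\ PK alpha q0 E a p2 = 0 /\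
    (forall x, 0 < x -> PK alpha q0 E a x = 0 -> x = p1 \/ x = p2) /\
    forall p : R, p1 < p < p2 ->
      let t0 := q0 * (E - 1 + 3 * alpha * p ^ 2) in
      t0 < 1 ->
      alpha < / 3 * / (q0 * (1 - (E - 1) * q0)) ->
      (* T maps the closed ball S_p of C(gamma) into itself *)
      (forall U : R -> Cx, Ccont_on d U ->
         (forall z, in_gamma d z -> Cmod (U z) <= p) ->
         Ccont_on d (T_op a alpha kappa Gamma d epsL U) /\
         forall z, in_gamma d z -> Cmod (T_op a alpha kappa Gamma d epsL U z) <= p) /\
      (* contraction: ||T U - T V|| <= t0 ||U - V||, stated via bounds on the sup norm *)
      (forall U V : R -> Cx, Ccont_on d U -> Ccont_on d V ->
         (forall z, in_gamma d z -> Cmod (U z) <= p) ->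
         (forall z, in_gamma d z -> Cmod (V z) <= p) ->
         forall M, (forall z, in_gamma d z -> Cmod (Csub (U z) (V z)) <= M) ->
         forall z, in_gamma d z ->
           Cmod (Csub (T_op a alpha kappa Gamma d epsL U z)
                      (T_op a alpha kappa Gamma d epsL V z)) <= t0 * M).
Proof.
  intros d Gamma q0.
  change (2 * PI * delta * kappa / cos phi) with q0 in Hq0, Halpha0.
  assert (Hcos : 0 < cos phi) by (apply cos_gt_0; lra).
  pose proof PI_RGT_0.
  assert (Hd : 0 < d) by (unfold d; apply Rmult_lt_0_compat; lra).
  assert (HGamma : 0 < Gamma) by (unfold Gamma; apply Rmult_lt_0_compat; lra).
  assert (Hq : 0 < q0)
    by (unfold q0; apply Rdiv_lt_0_compat; auto; fold d; apply Rmult_lt_0_compat; lra).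
  assert (Hweight : weight kappa Gamma d = q0) by (unfold weight, Gamma, d, q0; field; lra).
  assert (Hrange : forall z, in_gamma d z -> 1 < epsL z <= E) by (split; auto).
  destruct (PK_two_positive_roots alpha q0 E a) as
      (p1 & p2 & Hp1 & H12 & Hroot1 & Hroot2 & Honly & Hneg); auto.
  exists p1, p2. do 5 (split; [auto |]).
  intros p Hp t0 _ _.
  (* P_K(p) < 0 is exactly a + q0 (E - 1 + alpha p^2) p < p. *)
  pose proof (Hneg p Hp) as HPKp.
  split.
  - intros U HU HUp. split.
    + eapply T_op_continuous; eauto; lra.
    + intros z Hz. eapply Rle_trans; [eapply T_op_bound; eauto; lra |].
      rewrite Hweight. unfold PK in HPKp. nra.
  - intros U V HU HV HUp HVp M HM z Hz.
    eapply Rle_trans; [eapply T_op_contraction; eauto; lra |].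
    rewrite Hweight. right; unfold t0; ring.
Qed.
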